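(* Let $(X,\rho)$ be a metric space, $f\colon[0,\infty)\to[0,\infty)$ an unbounded modulus, $(A_i)\subset CL(X)$ and $A\in CL(X)$. Then $(A_i)$ is $f$-Wijsman statistically convergent to $A$ if and only if for each $x\in X$ there exists $K_x\subseteq\mathbb N$ such that $d^f(K_x)=0$ and $\lim_{i\to\infty,\ i\in\mathbb N\setminus K_x} d(x,A_i)=d(x,A)$.
   Context: A modulus is a function $f\colon[0,\infty)\to[0,\infty)$ such that $f(x)=0$ iff $x=0$, $f$ is subadditive, increasing and continuous. $CL(X)$ denotes the set of all non-empty closed subsets of $(X,\rho)$, and $d(x,B)=\inf_{y\in B}\rho(x,y)$. For an unbounded modulus $f$ and $K\subseteq\mathbb N$, the $f$-density is $d^f(K)=\lim_{n\to\infty}\frac{f(|\{k\le n:k\in K\}|)}{f(n)}$ (when the limit exists). A real sequence $(x_k)$ is $f$-statistically convergent to $l$ if for every $\varepsilon>0$ the set $\{k:|x_k-l|\ge\varepsilon\}$ has $f$-density $0$. $(A_i)$ is $f$-Wijsman statistically convergent to $A$ if for every $x\in X$ the sequence $(d(x,A_i))$ is $f$-statistically convergent to $d(x,A)$. *)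

From HB Require Import structures.
From mathcomp Require Import all_boot all_order all_algebra.
From mathcomp Require Import all_classical all_reals all_analysis.
Set Implicit Arguments. Unset Strict Implicit. Unset Printing Implicit Defensive.
Import Order.TTheory GRing.Theory Num.Theory numFieldNormedType.Exports.
Local Open Scope classical_set_scope.
Local Open Scope ring_scope.

Section Defs.
Variable R : realType.

Definition is_metric (X : Type) (rho : X -> X -> R) : Prop :=
  [/\ forall x y, 0 <= rho x y,
      forall x y, rho x y = 0 <-> x = y,
      forall x y, rho x y = rho y x &
      forall x y z, rho x z <= rho x y + rho y z].

Definition mclosed (X : Type) (rho : X -> X -> R) (B : set X) : Prop :=
  forall x, (forall e : R, 0 < e -> exists2 y, B y & rho x y < e) -> B x.

Definition in_CL (X : Type) (rho : X -> X -> R) (B : set X) : Prop :=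
  B !=set0 /\ mclosed rho B.

Definition dist_set (X : Type) (rho : X -> X -> R) (x : X) (B : set X) : R :=
  inf [set rho x y | y in B].

(* f : [0,oo) -> [0,oo) is a modulus (represented as f : R -> R, only its
   values on [0,oo) matter) *)
Definition modulus (f : R -> R) : Prop :=
  [/\ forall x, 0 <= x -> 0 <= f x,
      forall x, 0 <= x -> (f x = 0 <-> x = 0),
      forall x y, 0 <= x -> 0 <= y -> f (x + y) <= f x + f y,
      forall x y, 0 <= x -> x <= y -> f x <= f y &
      {within [set x : R | 0 <= x], continuous f}].

Definition unbounded_fun (f : R -> R) : Prop :=
  forall M : R, exists2 x, 0 <= x & M < f x.

Definition count_upto (K : set nat) (n : nat) : R :=
  (\sum_(k < n.+1) ((nat_of_ord k) \in K)%:R).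

Definition fdensity_zero (f : R -> R) (K : set nat) : Prop :=
  (fun n : nat => f (count_upto K n) / f n%:R) @ \oo --> (0 : R).

Definition fstat_cvg (f : R -> R) (u : nat -> R) (l : R) : Prop :=
  forall e : R, 0 < e -> fdensity_zero f [set k | e <= `|u k - l|].

Definition fWijsman_stat (X : Type) (rho : X -> X -> R) (f : R -> R)
  (A_ : nat -> set X) (A : set X) : Prop :=
  forall x : X, fstat_cvg f (fun i => dist_set rho x (A_ i)) (dist_set rho x A).

Definition lim_outside (K : set nat) (u : nat -> R) (l : R) : Prop :=
  forall e : R, 0 < e -> exists N : nat, forall i, (N <= i)%N -> ~ K i ->
    `|u i - l| < e.

End Defs.

From HB Require Import structures.
From mathcomp Require Import all_boot all_order all_algebra.
From mathcomp Require Import all_classical all_reals all_analysis.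
From mathcomp Require Import zify.
Set Implicit Arguments. Unset Strict Implicit. Unset Printing Implicit Defensive.
Import Order.TTheory GRing.Theory Num.Theory numFieldNormedType.Exports.
Local Open Scope classical_set_scope.
Local Open Scope ring_scope.

(* If d^f(K) = 0 and u -> l off K, then the set
   {i | e <= |u i - l|} lies in K up to finitely many indices; by subadditivity
   a finite set adds at most a constant to f(|K /\ [0, n]|), which is
   negligible against f(n) -> +oo.  Conversely, the sets
   K_j = {i | 1/(j+1) <= |u i - l|} increase with j and have f-density zero;
   gluing their tails beyond suitably late thresholds N_j gives a single set of
   f-density zero outside of which u -> l. *)

Section CountUpto.
Context {R : realType}.
Local Notation count_upto := (@count_upto R).

Lemma count_upto_ge0 K n : 0 <= count_upto K n.
Proof. by apply: sumr_ge0 => i _; exact: ler0n. Qed.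

Lemma le_count_upto (K K' : set nat) n :
  (forall k, (k <= n)%N -> K k -> K' k) -> count_upto K n <= count_upto K' n.
Proof.
move=> KK'; apply: ler_sum => i _; rewrite ler_nat.
have [/set_mem Ki|//] := boolP (nat_of_ord i \in K).
by rewrite mem_set //; apply: KK' => //; rewrite -ltnS.
Qed.

Lemma sum_ord_ltn_indicator (N m : nat) :
  \sum_(k < m) (nat_of_ord k < N)%:R = (minn m N)%:R :> R.
Proof.
elim: m => [|m IHm]; first by rewrite big_ord0 min0n.
rewrite big_ord_recr /= IHm -natrD; congr (_%:R).
by case: ltnP => /= mN; lia.
Qed.

Lemma count_upto_le_addn (S K : set nat) (N n : nat) :
  (forall k, S k -> K k \/ (k < N)%N) ->
  count_upto S n <= count_upto K n + N%:R.
Proof.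
move=> SK; apply: (@le_trans _ _ (\sum_(k < n.+1)
    ((nat_of_ord k \in K)%:R + (nat_of_ord k < N)%:R))).
  apply: ler_sum => i _; rewrite -natrD ler_nat.
  have [/set_mem /SK [/mem_set -> //|->]|//] := boolP (nat_of_ord i \in S).
  by rewrite addn1.
by rewrite big_split /= lerD2l sum_ord_ltn_indicator ler_nat geq_minr.
Qed.

End CountUpto.

Section FDensity.
Variables (R : realType) (f : R -> R).
Hypothesis f_ge0 : forall x, 0 <= x -> 0 <= f x.
Hypothesis f_subadd : forall x y, 0 <= x -> 0 <= y -> f (x + y) <= f x + f y.
Hypothesis f_nondecr : forall x y, 0 <= x -> x <= y -> f x <= f y.
Hypothesis f_unbounded : unbounded_fun f.
Local Notation count_upto := (@count_upto R).

Definition fdensity_ratio (K : set nat) (n : nat) : R :=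
  f (count_upto K n) / f n%:R.

Lemma fdensity_ratio_ge0 K n : 0 <= fdensity_ratio K n.
Proof. by rewrite divr_ge0 ?f_ge0 ?count_upto_ge0. Qed.

Lemma le_fdensity_ratio (K K' : set nat) n :
  (forall k, (k <= n)%N -> K k -> K' k) ->
  fdensity_ratio K n <= fdensity_ratio K' n.
Proof.
move=> KK'; rewrite ler_wpM2r ?invr_ge0 ?f_ge0 //.
by rewrite f_nondecr ?count_upto_ge0 ?le_count_upto.
Qed.

Lemma fdensity_zeroP K : fdensity_zero f K <->
  forall e, 0 < e -> exists M, forall n, (M <= n)%N -> fdensity_ratio K n < e.
Proof.
split=> [/cvgrPdist_lt dK e e0 | dK].
  have [M _ KM] := dK e e0; exists M => n /KM.
  by rewrite sub0r normrN ger0_norm // fdensity_ratio_ge0.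
apply/cvgrPdist_lt => e e0; have [M KM] := dK e e0.
by exists M => // n /KM; rewrite /= sub0r normrN ger0_norm // fdensity_ratio_ge0.
Qed.

Lemma f_nat_cvgy : f n%:R @[n --> \oo] --> +oo.
Proof.
apply/cvgryPge => A; have [x x0 Ax] := f_unbounded A.
near=> n; apply/ltW/(lt_le_trans Ax)/f_nondecr => //.
by apply/ltW; near: n; exact: nbhs_infty_gtr.
Unshelve. all: by end_near.
Qed.

Lemma cst_div_f_nat_cvg0 c : c / f n%:R @[n --> \oo] --> 0.
Proof.
rewrite -(mulr0 c); apply: cvgMr; apply/gtr0_cvgV0; last exact: f_nat_cvgy.
by have /cvgryPgt := f_nat_cvgy; apply.
Qed.

Lemma fdensity_zero_sub_finite (S K : set nat) (N : nat) :
  (forall k, S k -> K k \/ (k < N)%N) ->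
  fdensity_zero f K -> fdensity_zero f S.
Proof.
move=> SK dK.
apply: (@squeeze_cvgr _ _ _ _ (fun=> 0)
   (fun n => fdensity_ratio K n + f N%:R / f n%:R)); last 2 first.
- exact: cvg_cst.
- by rewrite -(addr0 0); apply: cvgD => //; exact: cst_div_f_nat_cvg0.
apply: nearW => n; rewrite fdensity_ratio_ge0 -mulrDl /=.
rewrite ler_wpM2r ?invr_ge0 ?f_ge0 //.
exact: le_trans (f_nondecr (count_upto_ge0 _ _) (count_upto_le_addn n SK))
  (f_subadd (count_upto_ge0 _ _) (ler0n _ _)).
Qed.

Lemma fdensity_zero_diagonal (Kj : nat -> set nat) :
  (forall i j, (i <= j)%N -> Kj i `<=` Kj j) ->
  (forall j, fdensity_zero f (Kj j)) ->
  exists2 K, fdensity_zero f K &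
    forall j, exists N, forall k, (N <= k)%N -> Kj j k -> K k.
Proof.
move=> Kj_nondecr dKj.
have /choice[M KjM] : forall j, exists M, forall n, (M <= n)%N ->
    fdensity_ratio (Kj j) n < j.+1%:R^-1.
  by move=> j; have /fdensity_zeroP := dKj j; apply; rewrite invr_gt0 ltr0n.
(* N j >= j bounds the indices j with N j <= n, so a largest one exists *)
pose N j := (M j + j)%N.
pose K := [set k | exists2 j, (N j <= k)%N & Kj j k].
exists K; last by move=> j; exists (N j) => k Nk Kjk; exists j.
apply/fdensity_zeroP => e e0.
have [j0] := ltr_add_invr e0; rewrite add0r => j0e.
exists (N j0) => n Nn.
have N_bounded j : (N j <= n)%N -> (j <= n)%N.
  by move/(leq_trans _); apply; rewrite leq_addl.
have [m Nm m_max] := ex_maxnP (ex_intro (fun j => N j <= n)%N j0 Nn) N_bounded.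
apply: (@le_lt_trans _ _ (fdensity_ratio (Kj m) n)).
  apply: le_fdensity_ratio => k kn [j Nj Kjk]; apply: Kj_nondecr Kjk.
  by apply: m_max; exact: leq_trans Nj kn.
apply: (lt_le_trans (KjM m n (leq_trans (leq_addr m (M m)) Nm))).
apply/ltW/(le_lt_trans _ j0e).
by rewrite lef_pV2 ?posrE ?ltr0n // ler_nat ltnS m_max.
Qed.

Lemma fstat_cvg_lim_outside (u : nat -> R) (l : R) :
  fstat_cvg f u l -> exists K, fdensity_zero f K /\ lim_outside K u l.
Proof.
move=> ul; pose Kj j := [set k | j.+1%:R^-1 <= `|u k - l|].
have Kj_nondecr i j : (i <= j)%N -> Kj i `<=` Kj j.
  by move=> ij k /=; apply: le_trans; rewrite lef_pV2 ?posrE ?ltr0n ?ler_nat.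
have dKj j : fdensity_zero f (Kj j) by apply: ul; rewrite invr_gt0 ltr0n.
have [K dK KjK] := fdensity_zero_diagonal Kj_nondecr dKj.
exists K; split=> // e e0.
have [j] := ltr_add_invr e0; rewrite add0r => je.
have [N KjK_N] := KjK j; exists N => i Ni Ki.
apply: (lt_trans _ je); rewrite ltNge; apply/negP => /(KjK_N i Ni); exact: Ki.
Qed.

Lemma lim_outside_fstat_cvg (K : set nat) (u : nat -> R) (l : R) :
  fdensity_zero f K -> lim_outside K u l -> fstat_cvg f u l.
Proof.
move=> dK uKl e e0; have [N KN] := uKl e e0.
apply: (fdensity_zero_sub_finite (N:=N)) dK.
move=> k /= ek; have [Kk|nKk] := pselect (K k); [by left | right].
by rewrite ltnNge; apply/negP => Nk; have := KN k Nk nKk; rewrite ltNge ek.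
Qed.

End FDensity.

Theorem theorem2p10 (R : realType) (X : Type) (rho : X -> X -> R)
  (hrho : is_metric rho) (f : R -> R) (hf : modulus f) (hfu : unbounded_fun f)
  (A_ : nat -> set X) (A : set X)
  (hAi : forall i, in_CL rho (A_ i)) (hA : in_CL rho A) :
  fWijsman_stat rho f A_ A <->
  (forall x : X, exists K : set nat,
     fdensity_zero f K /\
     lim_outside K (fun i => dist_set rho x (A_ i)) (dist_set rho x A)).
Proof.
case: hf => f_ge0 _ f_subadd f_nondecr _.
split=> [Wstat x | lim_off x].
  exact: (fstat_cvg_lim_outside f_ge0 f_nondecr (Wstat x)).
have [K [dK lK]] := lim_off x.
exact: (lim_outside_fstat_cvg f_ge0 f_subadd f_nondecr hfu dK lK).
Qed.
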